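(* Let $F$ be the class of all two-sorted term-modal frames (for the fixed agent set $\mathcal{A}$). For every formula $\varphi$ of the language $\mathcal{L}$: if $\vdash_{\mathbf{K}_{TM}}\varphi$, then $\models_F\varphi$, i.e. $\varphi$ is valid on every frame in $F$.
   Context: Fix a finite nonempty set of agents $\mathcal{A}=\{\alpha_1,\dots,\alpha_n\}$ and two sorts $agt$, $obj$. The language $\mathcal{L}$ has: countably infinite sets $VAR_{agt}$, $VAR_{obj}$ of variables; a countable (possibly empty) set of constants, each with a sort; a countable (possibly empty) set of function symbols, each with an arity $\alpha\in\{agt,obj\}^{k+1}$, $k\ge 0$ (first $k$ entries: argument sorts; last entry: value sort); a countable (possibly empty) set of relation symbols, each with an arity $\beta\in\{agt,obj\}^k$, $k\ge 1$; the symbol $=$; $\neg,\to$; $\forall$; and a modal operator $K_t$ for every agent-sorted term $t$. Terms: variables, constants, and $f(t_1,\dots,t_k)$ with $t_i$ of sort $\alpha_i$ (of sort $\alpha_{k+1}$). Formulas: $t_1=t_2$ (any terms), $P(t_1,\dots,t_k)$ ($t_i$ of sort $\beta_i$), $\neg\varphi$, $\varphi\to\psi$, $\forall x\varphi$, $K_t\varphi$ ($t$ agent-sorted). Other connectives as usual, $\exists x:=\neg\forall x\neg$, $P_t:=\neg K_t\neg$. Free variables as usual, except that the free variables of $K_t\varphi$ are those of $t$ together with those of $\varphi$. $\varphi(t/x)$ denotes substitution of $t$ for the free occurrences of $x$ (renaming bound variables so no variable of $t$ becomes bound). A frame is $\langle W,\mathcal{R},DOM\rangle$ with $W\neq\emptyset$,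 $\mathcal{R}:\mathcal{A}\to\mathcal{P}(W\times W)$, and $DOM=DOM_{agt}\sqcup DOM_{obj}$ a disjoint union of nonempty sets with $DOM_{agt}=\mathcal{A}$. An interpretation $\mathcal{I}$ assigns to each relation symbol $P$ of arity $\beta$ and world $w$ a set $\mathcal{I}(P,w)\subseteq\prod_{i=1}^k DOM_{\beta_i}$; to each function symbol $f$ of arity $\alpha$ and $w$ a set $\mathcal{I}(f,w)\subseteq\prod_{i=1}^{k+1}DOM_{\alpha_i}$; $\mathcal{I}(=,w)=\{(d,d):d\in DOM\}$; to each constant $c$ of sort $\sigma$ and $w$ an element $\mathcal{I}(c,w)\in DOM_\sigma$. A model is a frame plus an interpretation (it is ''based on'' the frame). A valuation $v$ maps each $VAR_\sigma$ surjectively onto $DOM_\sigma$; an $x$-variant of $v$ agrees with $v$ except possibly at $x$. Extensions: $t^{w,v}=v(t)$ for a variable, $\mathcal{I}(t,w)$ for a constant. Truth: $\mathcal M,w\models_v P(t_1,\dots,t_k)$ iff $(t_1^{w,v},\dots,t_k^{w,v})\in\mathcal{I}(P,w)$; $\mathcal M,w\models_v t_1=t_2$ iff $t_1^{w,v}=t_2^{w,v}$; $\neg,\to$ classically; $\mathcal M,w\models_v\forall x\varphi$ iff $\mathcal M,w\models_{v'}\varphi$ for every $x$-variant $v'$ of $v$; $\mathcal M,w\models_v K_t\varphi$ iff $\mathcal M,w'\models_v\varphi$ for all $w'$ with $(w,w')\in\mathcal{R}(t^{w,v})$. A formula is valid in a frame if it is true at every world under every valuation in every model based on the frame; valid on a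 class of frames if valid in each of its frames. The system $\mathbf{K}_{TM}$: axioms are all substitution instances (by formulas of $\mathcal L$) of valid formulas of propositional modal logic, together with: ($\forall$) $\forall x\varphi\to\varphi(y/x)$ for any formula $\varphi$ and variable $y$ free in $\varphi$; (Id) $t=t$ for every term $t$; (MSD) $x\neq y$ for $x\in VAR_{agt}$, $y\in VAR_{obj}$; (PS) $(x=y)\to(\varphi(x)\to\varphi(y))$ for variables $x,y$ and formulas $\varphi$ (with $x,y$ agent-sorted when they occur as modal indices); ($\exists$Id) $(c=c)\to\exists x(x=c)$ for every constant $c$; (N) $\exists x_1\cdots\exists x_n\big(x_1\neq x_2\wedge\dots\wedge x_{n-1}\neq x_n\wedge\forall y(y=x_1\vee\dots\vee y=x_n)\big)$ for agent variables $x_1,\dots,x_n,y$, $n=|\mathcal A|$; (K) $K_t(\varphi\to\psi)\to(K_t\varphi\to K_t\psi)$; (BF) $\forall xK_t\varphi\to K_t\forall x\varphi$ for agent-sorted $t$ and variable $x\neq t$; (KNI) $(x\neq y)\to K_t(x\neq y)$ for variables $x,y$ and agent-sorted $t$. Rules: modus ponens; (KG) from $\varphi$ infer $K_t\varphi$ for agent-sorted $t$; (Gen) from $\varphi\to\psi$ infer $\varphi\to\forall x\psi$ when $x$ is not free in $\varphi$. $\vdash_{\mathbf{K}_{TM}}\varphi$ means $\varphi$ is the last line of a finite sequence each of whose members is an axiom or follows from earlier ones by a rule. *)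

From mathcomp Require Import all_boot.
From Stdlib Require Import List.

Set Implicit Arguments.
Unset Strict Implicit.
Unset Printing Implicit Defensive.

Inductive sort := Agt | Obj.

Definition sort_eqb (s t : sort) : bool :=
  match s, t with Agt, Agt | Obj, Obj => true | _, _ => false end.

(* VAR_sigma = { (sigma, n) | n : nat } : countably infinite for each sort *)
Definition var := (sort * nat)%type.

Definition var_eqb (x y : var) : bool :=
  sort_eqb x.1 y.1 && Nat.eqb x.2 y.2.

Fixpoint memb (x : var) (l : list var) : bool :=
  match l with nil => false | y :: l' => var_eqb x y || memb x l' end.

Record signature := Signature {
  csym : countType;
  csort : csym -> sort;
  fsym : countType;
  fargs : fsym -> list sort;
  fres : fsym -> sort;
  rsym : countType;
  rargs : rsym -> list sort;
  rargs_ne : forall P, rargs P <> nil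
}.

Section Syntax.
Variable Sg : signature.

Inductive term :=
  | TVar (x : var)
  | TConst (c : csym Sg)
  | TApp (f : fsym Sg) (ts : list term).

Inductive form :=
  | FEq (t1 t2 : term)
  | FPred (P : rsym Sg) (ts : list term)
  | FNeg (phi : form)
  | FImp (phi psi : form)
  | FAll (x : var) (phi : form)
  | FK (t : term) (phi : form).

Definition tsort (t : term) : sort :=
  match t with
  | TVar x => x.1
  | TConst c => csort c
  | TApp f _ => fres f
  end.

Fixpoint wf_term (t : term) : Prop :=
  match t with
  | TVar _ => True
  | TConst _ => True
  | TApp f ts =>
      List.map tsort ts = fargs f /\
      (fix all_wf (l : list term) : Prop :=
         match l with nil => True | u :: l' => wf_term u /\ all_wf l' end) ts
  end.

Definition wf_terms (l : list term) : Prop := forall t, In t l -> wf_term t.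

Fixpoint wf_form (phi : form) : Prop :=
  match phi with
  | FEq t1 t2 => wf_term t1 /\ wf_term t2
  | FPred P ts => List.map tsort ts = rargs P /\ wf_terms ts
  | FNeg p => wf_form p
  | FImp p q => wf_form p /\ wf_form q
  | FAll _ p => wf_form p
  | FK t p => wf_term t /\ tsort t = Agt /\ wf_form p
  end.

Fixpoint tfv (t : term) : list var :=
  match t with
  | TVar x => x :: nil
  | TConst _ => nil
  | TApp _ ts => List.flat_map tfv ts
  end.

Fixpoint fv (phi : form) : list var :=
  match phi with
  | FEq t1 t2 => tfv t1 ++ tfv t2
  | FPred _ ts => List.flat_map tfv ts
  | FNeg p => fv p
  | FImp p q => fv p ++ fv q
  | FAll x p => List.filter (fun u => negb (var_eqb u x)) (fv p)
  | FK t p => tfv t ++ fv p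
  end.

Definition fresh (s : sort) (l : list var) : var :=
  (s, S (List.fold_right (fun u m => Nat.max u.2 m) 0 l)).

Definition upd_sub (sg : var -> term) (x : var) (t : term) : var -> term :=
  fun u => if var_eqb u x then t else sg u.

Fixpoint tsubst (sg : var -> term) (t : term) : term :=
  match t with
  | TVar x => sg x
  | TConst c => TConst c
  | TApp f ts => TApp f (List.map (tsubst sg) ts)
  end.

(* capture-avoiding simultaneous substitution: a bound variable is
   renamed (to a fresh one of the same sort) only when it would capture. *)
Fixpoint fsubst (sg : var -> term) (phi : form) : form :=
  match phi with
  | FEq t1 t2 => FEq (tsubst sg t1) (tsubst sg t2)
  | FPred P ts => FPred P (List.map (tsubst sg) ts)
  | FNeg p => FNeg (fsubst sg p)
  | FImp p q => FImp (fsubst sg p) (fsubst sg q)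
  | FAll z p =>
      let others := List.filter (fun u => negb (var_eqb u z)) (fv p) in
      let capture := List.existsb (fun u => memb z (tfv (sg u))) others in
      let z' := if capture
                then fresh z.1 (z :: fv p ++ List.flat_map (fun u => tfv (sg u)) others)
                else z in
      FAll z' (fsubst (upd_sub sg z (TVar z')) p)
  | FK t p => FK (tsubst sg t) (fsubst sg p)
  end.

Definition subst1 (phi : form) (t : term) (x : var) : form :=
  fsubst (upd_sub TVar x t) phi.

Definition FAnd (p q : form) : form := FNeg (FImp p (FNeg q)).
Definition FOr (p q : form) : form := FImp (FNeg p) q.
Definition FEx (x : var) (p : form) : form := FNeg (FAll x (FNeg p)).
Definition FNeq (t1 t2 : term) : form := FNeg (FEq t1 t2).

Fixpoint big_and (a : form) (l : list form) : form :=
  match l with nil => a | b :: l' => FAnd a (big_and b l') end.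
Fixpoint big_or (a : form) (l : list form) : form :=
  match l with nil => a | b :: l' => FOr a (big_or b l') end.
Fixpoint big_ex (xs : list var) (p : form) : form :=
  match xs with nil => p | x :: xs' => FEx x (big_ex xs' p) end.

Fixpoint chain_neq (xs : list var) : list form :=
  match xs with
  | x1 :: ((x2 :: _) as xs') => FNeq (TVar x1) (TVar x2) :: chain_neq xs'
  | _ => nil
  end.

Definition N_form (xs : list var) (y : var) : form :=
  let disj := match xs with
              | nil => FEq (TVar y) (TVar y) (* unused: n >= 1 *)
              | x1 :: xs' => big_or (FEq (TVar y) (TVar x1))
                                    (List.map (fun x => FEq (TVar y) (TVar x)) xs')
              end in
  let allp := FAll y disj in
  big_ex xs (match chain_neq xs with
             | nil => allp
             | c :: cs => big_and c (cs ++ allp :: nil)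
             end).

Inductive pform :=
  | PAtom (i : nat)
  | PNeg (p : pform)
  | PImp (p q : pform)
  | PBox (i : nat) (p : pform).

Fixpoint psat (W : Type) (Rm : nat -> W -> W -> Prop) (val : nat -> W -> Prop)
  (w : W) (p : pform) : Prop :=
  match p with
  | PAtom i => val i w
  | PNeg q => ~ psat Rm val w q
  | PImp q r => psat Rm val w q -> psat Rm val w r
  | PBox i q => forall w', Rm i w w' -> psat Rm val w' q
  end.

Definition pvalid (p : pform) : Prop :=
  forall (W : Type) (Rm : nat -> W -> W -> Prop) (val : nat -> W -> Prop) (w : W),
    psat Rm val w p.

Fixpoint pinst (sa : nat -> form) (sb : nat -> term) (p : pform) : form :=
  match p with
  | PAtom i => sa i
  | PNeg q => FNeg (pinst sa sb q)
  | PImp q r => FImp (pinst sa sb q) (pinst sa sb r)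
  | PBox i q => FK (sb i) (pinst sa sb q)
  end.

Inductive KTM_axiom (n : nat) : form -> Prop :=
  | AxTaut p sa sb : pvalid p -> KTM_axiom n (pinst sa sb p)
  | AxAll (x y : var) phi :
      In y (fv phi) -> y.1 = x.1 ->
      KTM_axiom n (FImp (FAll x phi) (subst1 phi (TVar y) x))
  | AxId t : KTM_axiom n (FEq t t)
  | AxMSD (x y : var) : x.1 = Agt -> y.1 = Obj ->
      KTM_axiom n (FNeq (TVar x) (TVar y))
  | AxPS (x y : var) phi :
      KTM_axiom n (FImp (FEq (TVar x) (TVar y))
                        (FImp phi (subst1 phi (TVar y) x)))
  | AxExId (c : csym Sg) (x : var) : x.1 = csort c ->
      KTM_axiom n (FImp (FEq (TConst c) (TConst c))
                        (FEx x (FEq (TVar x) (TConst c))))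
  | AxN (xs : list var) (y : var) :
      length xs = n -> NoDup (y :: xs) -> (forall u, In u (y :: xs) -> u.1 = Agt) ->
      KTM_axiom n (N_form xs y)
  | AxK t phi psi :
      KTM_axiom n (FImp (FK t (FImp phi psi)) (FImp (FK t phi) (FK t psi)))
  | AxBF (x : var) t phi : ~ In x (tfv t) ->
      KTM_axiom n (FImp (FAll x (FK t phi)) (FK t (FAll x phi)))
  | AxKNI (x y : var) t :
      KTM_axiom n (FImp (FNeq (TVar x) (TVar y)) (FK t (FNeq (TVar x) (TVar y)))).

(* Every line of a derivation is a formula of L (well-formed); sort
   restrictions such as "t agent-sorted" are enforced by wf_form. *)
Inductive KTM_provable (n : nat) : form -> Prop :=
  | PrAx phi : KTM_axiom n phi -> wf_form phi -> KTM_provable n phi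
  | PrMP phi psi : KTM_provable n phi -> KTM_provable n (FImp phi psi) ->
      KTM_provable n psi
  | PrKG t phi : wf_term t -> tsort t = Agt -> KTM_provable n phi ->
      KTM_provable n (FK t phi)
  | PrGen (x : var) phi psi : ~ In x (fv phi) -> KTM_provable n (FImp phi psi) ->
      KTM_provable n (FImp phi (FAll x psi)).

Section Semantics.
Variables (A : finType) (W : Type) (D : Type).

(* DOM = DOM_agt (= A) disjoint-union DOM_obj (= D) *)
Definition dom := (A + D)%type.
Definition dsort (d : dom) : sort := match d with inl _ => Agt | inr _ => Obj end.

(* An interpretation (the relation R belongs to the frame). *)
Record interp := Interp {
  Ic : csym Sg -> W -> dom;
  If : fsym Sg -> W -> list dom -> dom;
  Ip : rsym Sg -> W -> list dom -> Prop
}.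

Definition interp_ok (I : interp) : Prop :=
  (forall c w, dsort (Ic I c w) = csort c) /\
  (forall f w ds, List.map dsort ds = fargs f -> dsort (If I f w ds) = fres f) /\
  (forall P w ds, Ip I P w ds -> List.map dsort ds = rargs P).

Definition assignment := var -> dom.
Definition sorted_asg (v : assignment) : Prop := forall x, dsort (v x) = x.1.
Definition valuation (v : assignment) : Prop :=
  sorted_asg v /\ forall (s : sort) (d : dom), dsort d = s -> exists k, v (s, k) = d.

Definition upd (v : assignment) (x : var) (d : dom) : assignment :=
  fun u => if var_eqb u x then d else v u.

Variables (R : A -> W -> W -> Prop) (I : interp).

Fixpoint eval (w : W) (v : assignment) (t : term) : dom :=
  match t with
  | TVar x => v x
  | TConst c => Ic I c w
  | TApp f ts => If I f w (List.map (eval w v) ts)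
  end.

Fixpoint sat (w : W) (v : assignment) (phi : form) : Prop :=
  match phi with
  | FEq t1 t2 => eval w v t1 = eval w v t2
  | FPred P ts => Ip I P w (List.map (eval w v) ts)
  | FNeg p => ~ sat w v p
  | FImp p q => sat w v p -> sat w v q
  | FAll x p => forall d, dsort d = x.1 -> sat w (upd v x d) p
  | FK t p =>
      match eval w v t with
      | inl a => forall w', R a w w' -> sat w' v p
      | inr _ => True   (* impossible for well-formed K_t phi *)
      end
  end.

End Semantics.

Definition valid_in_frame (A : finType) (W D : Type) (R : A -> W -> W -> Prop)
  (phi : form) : Prop :=
  forall (I : interp A W D), interp_ok I ->
  forall (w : W) (v : assignment A D), valuation v -> sat R I w v phi.

Definition valid_all_frames (A : finType) (phi : form) : Prop :=
  forall (W D : Type), inhabited W -> inhabited D ->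
  forall (R : A -> W -> W -> Prop), @valid_in_frame A W D R phi.

End Syntax.

From mathcomp Require Import all_boot.
From Stdlib Require Import List FunctionalExtensionality Lia.

(* The induction is carried out for
   every sort-respecting assignment, not only for surjective valuations: the
   quantifier rules need updated assignments, which need not stay surjective.
   Beyond the classical first-order reasoning, each modal axiom rests on one
   feature of the semantics: (BF) on the domain being the same at all worlds,
   (KNI) and (PS) on variables denoting world-independently, and (N) on the
   agent domain being exactly A, of size #|A|. *)

Lemma var_eqbP (x y : var) : reflect (x = y) (var_eqb x y).
Proof.
case: x y => [[] m] [[] k]; rewrite /var_eqb /=; try by constructor.
all: by case: (PeanoNat.Nat.eqb_spec m k) => [->|Hmk]; constructor=> // -[].
Qed.

Lemma var_eqb_refl (x : var) : var_eqb x x.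
Proof. exact/var_eqbP. Qed.

Lemma memb_In (x : var) (l : list var) : memb x l <-> In x l.
Proof.
elim: l => [|y l IH] /=; first by split.
by rewrite -IH; split=> [/orP[/var_eqbP ->|]|[->|->]]; rewrite ?var_eqb_refl ?orbT; auto.
Qed.

Lemma fresh_notin s (l : list var) : ~ In (fresh s l) l.
Proof.
have Hbound : forall y, In y l -> (y.2 <= fold_right (fun u m => Nat.max u.2 m) 0 l)%coq_nat.
  elim: l => [|a l IH] //= y [<-|/IH]; lia.
by move=> /Hbound /=; lia.
Qed.

Lemma Forall2_in_r {T : Type} {U : eqType} {P : T -> U -> Prop} {xs l a} :
  Forall2 P xs l -> a \in l -> exists2 x, In x xs & P x a.
Proof.
elim=> [|x b xs' l' Hxb _ IH] //; rewrite inE => /orP[/eqP ->|/IH[y Hy Hya]].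
- by exists x; [left|].
- by exists y; [right|].
Qed.

Section TermInd.
Variables (Sg : signature) (P : term Sg -> Prop).
Hypotheses (HVar : forall x, P (TVar Sg x)) (HConst : forall c, P (TConst c))
  (HApp : forall f ts, Forall P ts -> P (TApp f ts)).

Fixpoint term_ind_nested (t : term Sg) : P t :=
  match t with
  | TVar x => HVar x
  | TConst c => HConst c
  | TApp f ts => HApp f ts
      ((fix all_P (l : list (term Sg)) : Forall P l :=
          match l with
          | nil => Forall_nil P
          | u :: l' => Forall_cons u (term_ind_nested u) (all_P l')
          end) ts)
  end.

End TermInd.

Section Semantics.
Variables (Sg : signature) (A : finType) (W D : Type) (R : A -> W -> W -> Prop)
  (I : interp Sg A W D).
Implicit Types (v : assignment A D) (w : W).

Lemma upd_same v x d : upd v x d x = d.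
Proof. by rewrite /upd var_eqb_refl. Qed.

Lemma upd_other v x d u : u <> x -> upd v x d u = v u.
Proof. by rewrite /upd; case: var_eqbP. Qed.

Lemma upd_eta v x : upd v x (v x) = v.
Proof. by apply: functional_extensionality => u; rewrite /upd; case: var_eqbP => [->|]. Qed.

Lemma sorted_upd v x d : sorted_asg v -> dsort d = x.1 -> sorted_asg (upd v x d).
Proof. by move=> Hv Hd u; rewrite /upd; case: var_eqbP => [->|]. Qed.

Lemma eval_ext (t : term Sg) w v v' :
  (forall u, In u (tfv t) -> v u = v' u) -> eval I w v t = eval I w v' t.
Proof.
elim/term_ind_nested: t => [x|c|f ts /Forall_forall IH] /= Hvv'; auto.
congr (If I f w _); apply: map_ext_in => t Ht.
by apply: IH => // u Hu; apply: Hvv'; apply/in_flat_map; exists t.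
Qed.

Lemma sat_ext (phi : form Sg) w v v' :
  (forall u, In u (fv phi) -> v u = v' u) -> (sat R I w v phi <-> sat R I w v' phi).
Proof.
elim: phi w v v' => [t1 t2|P ts|p IH|p IHp q IHq|x p IH|t p IH] /= w v v' Hvv'.
- by rewrite (eval_ext t1 w v v') ?(eval_ext t2 w v v') // => u Hu;
    apply: Hvv'; apply: in_or_app; auto.
- rewrite (map_ext_in (eval I w v) (eval I w v')) // => t Ht.
  by apply: eval_ext => u Hu; apply: Hvv'; apply/in_flat_map; exists t.
- by rewrite (IH w v v').
- by rewrite (IHp w v v') ?(IHq w v v') // => u Hu; apply: Hvv'; apply: in_or_app; auto.
- have Hupd d u : In u (fv p) -> upd v x d u = upd v' x d u.
    rewrite /upd; case: var_eqbP => // Hux Hu.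
    by apply: Hvv'; apply/filter_In; split=> //; case: var_eqbP.
  by split=> Hs d Hd; move: (Hs d Hd); rewrite (IH w _ _ (Hupd d)).
- rewrite (eval_ext t w v v'); last by move=> u Hu; apply: Hvv'; apply: in_or_app; auto.
  case: (eval I w v' t) => // a.
  have Hp w' : sat R I w' v p <-> sat R I w' v' p.
    by apply: IH => u Hu; apply: Hvv'; apply: in_or_app; auto.
  by split=> Hs w' Hw'; apply/Hp; apply: Hs.
Qed.

Lemma eval_subst (t : term Sg) w v sg :
  eval I w v (tsubst sg t) = eval I w (fun u => eval I w v (sg u)) t.
Proof.
elim/term_ind_nested: t => [x|c|f ts /Forall_forall IH] //=.
by rewrite map_map; congr (If I f w _); apply: map_ext_in.
Qed.

(* The binder [z'] in [fsubst sg (FAll z p) = FAll z' _]. *)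
Definition renamed_binder (sg : var -> term Sg) (z : var) (p : form Sg) : var :=
  let others := filter (fun u => negb (var_eqb u z)) (fv p) in
  if existsb (fun u => memb z (tfv (sg u))) others
  then fresh z.1 (z :: fv p ++ flat_map (fun u => tfv (sg u)) others)
  else z.

Lemma renamed_binder_sort sg z p : (renamed_binder sg z p).1 = z.1.
Proof. by rewrite /renamed_binder; case: existsb. Qed.

Lemma renamed_binder_not_captured sg z p u :
  In u (fv p) -> u <> z -> ~ In (renamed_binder sg z p) (tfv (sg u)).
Proof.
rewrite /renamed_binder; set others := filter _ _ => Hu Huz.
have Hother : In u others by apply/filter_In; split=> //; case: var_eqbP.
case Ecapture: existsb => Hin.
- apply: (fresh_notin z.1 (z :: fv p ++ flat_map (fun u => tfv (sg u)) others)).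
  by right; apply: in_or_app; right; apply/in_flat_map; exists u.
- move: Ecapture => /negP; apply; apply/existsb_exists; exists u.
  by split=> //; apply/memb_In.
Qed.

(* Only renamings are considered: constants and function symbols are not rigid,
   so substituting arbitrary terms under [K_t] is unsound. *)
Definition is_renaming (sg : var -> term Sg) : Prop := forall u, exists y, sg u = TVar Sg y.

Lemma eval_renaming_rigid sg w w' v : is_renaming sg ->
  (fun u => eval I w v (sg u)) = (fun u => eval I w' v (sg u)).
Proof. by move=> Hsg; apply: functional_extensionality => u; case: (Hsg u) => y ->. Qed.

Lemma sat_subst (phi : form Sg) sg w v : is_renaming sg ->
  (sat R I w v (fsubst sg phi) <-> sat R I w (fun u => eval I w v (sg u)) phi).
Proof.
elim: phi sg w v => [t1 t2|P ts|p IH|p IHp q IHq|z p IH|t p IH] sg w v Hsg /=.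
- by rewrite !eval_subst.
- by rewrite map_map (map_ext _ _ (fun t => eval_subst t w v sg)).
- by rewrite IH.
- by rewrite IHp ?IHq.
- rewrite renamed_binder_sort; set z' := renamed_binder sg z p.
  have Hren : is_renaming (upd_sub sg z (TVar Sg z')).
    by move=> u; rewrite /upd_sub; case: var_eqb; [exists z'|].
  have Hbody d : sat R I w (upd v z' d) (fsubst (upd_sub sg z (TVar Sg z')) p) <->
                 sat R I w (upd (fun u => eval I w v (sg u)) z d) p.
    rewrite IH //; apply: sat_ext => u Hu; rewrite /upd_sub /upd.
    case: var_eqbP => [_|Huz] /=; first by rewrite var_eqb_refl.
    case: (Hsg u) (renamed_binder_not_captured sg z p u Hu Huz) => y -> /= Hy.
    by case: var_eqbP => // Hyz; case: Hy; left.
  by split=> Hs d Hd; apply/Hbody; apply: Hs.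
- rewrite eval_subst; case: (eval I w _ t) => // a.
  by split=> Hs w' Hw'; move: (Hs w' Hw'); rewrite IH // (eval_renaming_rigid sg w' w v Hsg).
Qed.

Lemma sat_subst1 (phi : form Sg) w v x y :
  sat R I w v (subst1 phi (TVar Sg y) x) <-> sat R I w (upd v x (v y)) phi.
Proof.
have Hren : is_renaming (upd_sub (TVar Sg) x (TVar Sg y)).
  by move=> u; rewrite /upd_sub; case: var_eqb; eexists.
rewrite /subst1 sat_subst //; apply: sat_ext => u _.
by rewrite /upd_sub /upd; case: var_eqb.
Qed.

Definition box_rel v (sb : nat -> term Sg) (i : nat) (w w' : W) : Prop :=
  match eval I w v (sb i) with inl a => R a w w' | inr _ => False end.

Lemma sat_pinst v sa sb (p : pform) w :
  sat R I w v (pinst sa sb p) <-> psat (box_rel v sb) (fun i w => sat R I w v (sa i)) w p.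
Proof.
elim: p w => [i|p IH|p IHp q IHq|i p IH] w /=.
- by [].
- by rewrite IH.
- by rewrite IHp IHq.
- rewrite /box_rel; case: (eval I w v (sb i)) => [a|d].
  + by split=> Hs w' Hw'; apply/IH; apply: Hs.
  + by split.
Qed.

Fixpoint upds v (xs : list var) (l : list A) : assignment A D :=
  match xs, l with
  | x :: xs', a :: l' => upds (upd v x (inl a)) xs' l'
  | _, _ => v
  end.

Lemma upds_notin xs l v u : ~ In u xs -> upds v xs l u = v u.
Proof.
elim: xs l v => [|x xs IH] [|a l] v //= /Decidable.not_or [Hxu Hu].
by rewrite IH // upd_other // => Hux; apply: Hxu.
Qed.

Lemma upds_in xs l v : NoDup xs -> length xs = length l ->
  Forall2 (fun x a => upds v xs l x = inl a) xs l.
Proof.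
elim: xs l v => [|x xs IH] [|a l] v //= /NoDup_cons_iff[Hx Hxs] [Hlen].
by constructor; [rewrite upds_notin // upd_same | apply: IH].
Qed.

Lemma sat_big_ex_intro w v xs l p : length xs = length l -> (forall x, In x xs -> x.1 = Agt) ->
  sat R I w (upds v xs l) p -> sat R I w v (big_ex xs p).
Proof.
elim: xs l v => [|x xs IH] [|a l] v //= [Hlen] Hagt Hp Hnone.
apply: (Hnone (inl a)); first by rewrite /= Hagt //; left.
by apply: (IH l) => // z Hz; apply: Hagt; right.
Qed.

Lemma sat_big_or_intro w v a l :
  sat R I w v a \/ (exists b, In b l /\ sat R I w v b) -> sat R I w v (big_or a l).
Proof.
elim: l a => [|b l IH] a /=; first by case=> [|[b []]].
case=> [Ha /(_ Ha) //|[b' [Hb' Hs]] _].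
by apply: IH; case: Hb' => [->|Hb']; [left | right; exists b'].
Qed.

Lemma sat_big_and_intro w v a l :
  sat R I w v a -> (forall b, In b l -> sat R I w v b) -> sat R I w v (big_and a l).
Proof.
elim: l a => [|b l IH] a //= Ha Hl; apply; first exact: Ha.
by apply: IH => [|c Hc]; apply: Hl; auto.
Qed.

Lemma sat_chain_neq w v xs l : Forall2 (fun x a => v x = inl a) xs l -> uniq l ->
  forall f, In f (chain_neq Sg xs) -> sat R I w v f.
Proof.
elim=> [|x1 a1 xs1 l1 Hx1 Hval IH] //.
case: Hval IH => [|x2 a2 xs2 l2 Hx2 Hval] IH //=.
rewrite inE => /andP[/norP[Ha12 _] Hl2] f [<-|Hf] /=.
- by rewrite Hx1 Hx2 => -[Ha]; rewrite Ha eqxx in Ha12.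
- exact: IH.
Qed.

Lemma sat_conj_last w v fs phi : (forall f, In f fs -> sat R I w v f) -> sat R I w v phi ->
  sat R I w v (match fs with nil => phi | c :: cs => big_and c (cs ++ phi :: nil) end).
Proof.
case: fs => // c cs Hfs Hphi; apply: sat_big_and_intro => [|b Hb]; first by apply: Hfs; left.
by case: (in_app_or _ _ _ Hb) => [Hcs|[<-|[]]] //; apply: Hfs; right.
Qed.

Lemma sat_N_form w v xs y : length xs = #|A| -> NoDup (y :: xs) ->
  (forall u, In u (y :: xs) -> u.1 = Agt) -> sat R I w v (N_form Sg xs y).
Proof.
case: xs => [|x1 xs] Hlen /NoDup_cons_iff[Hy Hxs] Hagt; first by move=> d _.
have Hlen' : length (x1 :: xs) = length (enum A) by rewrite Hlen cardE.
apply: (sat_big_ex_intro _ _ _ _ _ Hlen') => [x Hx|]; first by apply: Hagt; right.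
have := upds_in _ _ v Hxs Hlen'; set v' := upds _ _ _; clearbody v' => Hval.
apply: sat_conj_last; first exact: (sat_chain_neq _ _ _ _ Hval (enum_uniq A)).
move=> [a|d] /= Hd; last by rewrite Hagt in Hd; [|left].
have [x Hx Hxa] := Forall2_in_r Hval (mem_enum A a).
have Hxy : x <> y by move=> Exy; apply: Hy; rewrite -Exy.
apply: sat_big_or_intro => /=; rewrite upd_same.
case: Hx => [->|Hx]; [left | right; exists (FEq (TVar Sg y) (TVar Sg x)); split].
- by rewrite upd_other // Hxa.
- exact: (in_map (fun x => FEq (TVar Sg y) (TVar Sg x))).
- by rewrite /= upd_same upd_other // Hxa.
Qed.

Lemma sat_KTM_axiom phi w v : interp_ok I -> sorted_asg v ->
  KTM_axiom #|A| phi -> sat R I w v phi.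
Proof.
move=> [Hconst _] Hv; case=> {phi} /=.
- by move=> p sa sb Hp; apply/sat_pinst; apply: Hp.
- by move=> x y phi _ Hxy Hall; apply/sat_subst1; apply: Hall; rewrite Hv.
- by [].
- by move=> x y Hx Hy Exy; move: (Hv x) (Hv y); rewrite Exy Hx Hy => ->.
- by move=> x y phi Exy Hphi; apply/sat_subst1; rewrite -Exy upd_eta.
- move=> c x Hx _ /(_ (Ic I c w)); apply; first by rewrite Hconst.
  by rewrite /= upd_same.
- by move=> xs y; apply: sat_N_form.
- move=> t phi psi; case: (eval I w v t) => // a Himp Hphi w' Hw'.
  exact: Himp w' Hw' (Hphi w' Hw').
- move=> x t phi Hx Hall; case Et: (eval I w v t) => [a|//] w' Hw' d Hd.
  have Eupd : eval I w (upd v x d) t = eval I w v t.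
    by apply: eval_ext => u Hu; apply: upd_other => Eux; apply: Hx; rewrite -Eux.
  by move: (Hall d Hd) => /=; rewrite Eupd Et; apply.
- by move=> x y t Hneq; case: (eval I w v t).
Qed.

Lemma sat_KTM_provable phi : KTM_provable #|A| phi -> interp_ok I ->
  forall w v, sorted_asg v -> sat R I w v phi.
Proof.
move=> Hprov HI; elim: Hprov => {phi}
  [phi Hax _|phi psi _ IHphi _ IHimp|t phi _ _ _ IH|x phi psi Hx _ IH] w v Hv /=.
- exact: sat_KTM_axiom.
- exact: IHimp w v Hv (IHphi w v Hv).
- by case: (eval I w v t) => // a w' _; apply: IH.
- move=> Hphi d Hd; apply: IH; first exact: sorted_upd.
  apply/(sat_ext phi w (upd v x d) v) => // u Hu.
  by apply: upd_other => Eux; apply: Hx; rewrite -Eux.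
Qed.

End Semantics.

Theorem theorem6p2 (Sg : signature) (A : finType) (hA : 0 < #|A|)
  (phi : form Sg) :
  KTM_provable #|A| phi -> valid_all_frames A phi.
Proof.
move=> Hprov W D _ _ R I HI w v [Hv _].
exact: sat_KTM_provable Hprov HI w v Hv.
Qed.
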